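(* Let $W=\langle \mathcal{D},\mathcal{N},\mathrm{wr},\mathrm{gd}\rangle$ be a (1-safe) DAW-net and let $\mathit{RG}_W=(T,\overline{S},\overline{s}_0,\overline{\delta})$ be its reachability graph. Let $\mathrm{bc}(W)$ be the $\mathcal{BC}$ action description encoding $W$ and $\mathit{TS}_{\mathrm{bc}(W)}$ the transition system induced by $\mathrm{bc}(W)$ (all as defined in the context). Then $\mathit{TS}_{\mathrm{bc}(W)}$ and $\mathit{RG}_W$ are trace equivalent.
   Context: **Data model and guards.** A data model is $\mathcal{D}=(\mathcal{V},\Delta,\mathrm{dm},\mathrm{ord})$: $\mathcal{V}$ is a set of variables; $\Delta=\{\Delta_1,\dots,\Delta_n\}$ is a set of (not necessarily disjoint) domains; $\mathrm{dm}:\mathcal{V}\to\Delta$ is total and surjective and assigns to each variable its finite domain; $\mathrm{ord}$ is a partial function which, for a domain $\Delta_i$ on which it is defined, returns a partial order $\le_{\Delta_i}\subseteq\Delta_i\times\Delta_i$. An assignment is a partial function $\eta$ on $\mathcal{V}$ with $\eta(v)\in\mathrm{dm}(v)$ whenever $\eta(v)$ is defined. Guards are given by the grammar $\Phi ::= \mathit{true}\mid \mathrm{def}(v)\mid t_1=t_2\mid t_1\le t_2\mid \neg\Phi\mid \Phi\wedge\Phi$, where $v\in\mathcal{V}$ and $t_1,t_2\in\mathcal{V}\cup\bigcup_i\Delta_i$. Write $t[\eta]$ for $\eta(t)$ if $t$ is a variable on which $\eta$ is defined, and $t$ otherwise. Then $\mathcal{D},\eta\models\mathit{true}$; $\mathcal{D},\eta\models\mathrm{def}(v)$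 iff $\eta(v)$ is defined; $\mathcal{D},\eta\models t_1=t_2$ iff $t_1[\eta],t_2[\eta]\notin\mathcal{V}$ and $t_1[\eta]=t_2[\eta]$; $\mathcal{D},\eta\models t_1\le t_2$ iff $t_1[\eta],t_2[\eta]\in\Delta_i$ for some $i$ with $\mathrm{ord}(\Delta_i)$ defined and $t_1[\eta]\le_{\Delta_i}t_2[\eta]$; negation and conjunction are classical. **DAW-nets.** A Petri net is $\mathcal{N}=(P,T,F)$ with $F\subseteq(P\times T)\cup(T\times P)$; ${}^\bullet t=\{p\mid (p,t)\in F\}$, $t^\bullet=\{p\mid (t,p)\in F\}$; a marking is $M:P\to\mathbb{N}$. $\mathcal{N}$ is a workflow net with a distinguished place $\mathit{start}$ (no incoming arcs) and a distinguished place $\mathit{sink}$. A DAW-net is $W=\langle\mathcal{D},\mathcal{N},\mathrm{wr},\mathrm{gd}\rangle$ where $\mathrm{wr}$ maps each $t\in T$ to a partial function $\mathrm{wr}(t)$ from $\mathcal{V}$ with $\mathrm{wr}(t)(v)\subseteq\mathrm{dm}(v)$, and $\mathrm{gd}$ maps each $t$ to a guard. A state is a pair $(M,\eta)$. A firing $(M,\eta)\xrightarrow{t}(M',\eta')$ is valid iff: $\{p\mid M(p)>0\}\supseteq{}^\bullet t$; $\mathcal{D},\eta\models\mathrm{gd}(t)$; $M'(p)=M(p)-1$ if $p\in{}^\bullet t\setminus t^\bullet$, $M'(p)=M(p)+1$ if $p\in t^\bullet\setminus{}^\bullet t$, $M'(p)=M(p)$ otherwise; $\mathrm{dom}(\eta')=\mathrm{dom}(\eta)\cup\{v\mid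 \mathrm{wr}(t)(v)\neq\emptyset\}\setminus\{v\mid\mathrm{wr}(t)(v)=\emptyset\}$ and for $v\in\mathrm{dom}(\eta')$, $\eta'(v)\in\mathrm{wr}(t)(v)$ if $v\in\mathrm{dom}(\mathrm{wr}(t))$ and $\eta'(v)=\eta(v)$ otherwise. The initial state is $(M_s,\eta_s)$ with $M_s(\mathit{start})=1$, $M_s(p)=0$ for other $p$, and $\eta_s$ empty. Standing assumption: $W$ is 1-safe (in every state reachable from the initial state each place holds at most one token). $\mathcal{V}'$ is the finite set of variables appearing in $W$, and $\mathrm{adm}(v)=\bigcup_{t\in T}\mathrm{wr}(t)(v)$ is the active domain of $v$. **Reachability graph.** $\mathit{RG}_W=(T,\overline{S},\overline{s}_0,\overline{\delta})$ with $\overline{s}_0=(M_s,\eta_s)$, where $\overline{S}$ and $\overline{\delta}\subseteq\overline{S}\times T\times\overline{S}$ are the least sets such that $\overline{s}_0\in\overline{S}$ and, if $(M,\eta)\in\overline{S}$ and $(M,\eta)\xrightarrow{t}(M',\eta')$ is valid, then $(M',\eta')\in\overline{S}$ and $((M,\eta),t,(M',\eta'))\in\overline{\delta}$. **Trace equivalence.** A path of a labelled transition system is a sequence $s_0\xrightarrow{l_1}s_1\cdots\xrightarrow{l_n}s_n$ ($n\ge0$) starting in an initial state and following its transitions. $\mathit{RG}$ and a transition system $\mathit{TS}$ are trace equivalent iff there is an injective function $\mathrm{enc}$ from the states and transitions of $\mathit{RG}$ to the states and transition labels of $\mathit{TS}$ such that (1) for every path $s_0\xrightarrow{t_1}\cdots\xrightarrow{t_n}s_n$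 of $\mathit{RG}$, $\mathrm{enc}(s_0)\xrightarrow{\mathrm{enc}(t_1)}\cdots\xrightarrow{\mathrm{enc}(t_n)}\mathrm{enc}(s_n)$ is a path of $\mathit{TS}$; and (2) for every path $s'_0\xrightarrow{t'_1}\cdots\xrightarrow{t'_n}s'_n$ of $\mathit{TS}$ there is a path $s_0\xrightarrow{t_1}\cdots\xrightarrow{t_n}s_n$ of $\mathit{RG}$ with $\mathrm{enc}(s_i)=s'_i$ for $0\le i\le n$ and $\mathrm{enc}(t_i)=t'_i$ for $1\le i\le n$. **The action language $\mathcal{BC}$.** A description $B$ has fluent constants, each with a finite domain of size $\ge 2$ (Boolean fluents have domain $\{\mathrm{true},\mathrm{false}\}$), and action constants; an atom is $f=v$ with $v$ in the domain of $f$. Dynamic laws are ''$A_0$ after $A'_1,\dots,A'_n$ ifcons $A_{n+1},\dots,A_m$'' ($A_0,A_{n+1},\dots,A_m$ atoms or $A_0=\mathrm{false}$; $A'_j$ atoms or action constants), static laws ''$A_0$ if $A_1,\dots,A_n$ ifcons $A_{n+1},\dots,A_m$'', and ''initially $A$''. For $\ell\ge0$, $P_\ell(B)$ is the disjunctive logic program with classical negation $\neg$ and default negation $\sim$ over atoms $i{:}A$ containing: for each static law and $0\le i\le\ell$, $i{:}A_0\leftarrow i{:}A_1,\dots,i{:}A_n,\sim\neg(i{:}A_{n+1}),\dots,\sim\neg(i{:}A_m)$; for each dynamic law and $0\le i<\ell$, $i{+}1{:}A_0\leftarrow i{:}A'_1,\dots,i{:}A'_n,\sim\neg(i{+}1{:}A_{n+1}),\dots,\sim\neg(i{+}1{:}A_m)$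 (a constraint when $A_0=\mathrm{false}$); for each ''initially $f=v$'', the fact $0{:}f=v$; $0{:}f=v\vee\neg(0{:}f=v)$ for each fluent $f$ and value $v$; $i{:}a\vee\neg(i{:}a)$ for each action constant $a$ and $i<\ell$; and for each fluent $f$ and $i\le\ell$, $\leftarrow\sim(i{:}f=v_1),\dots,\sim(i{:}f=v_k)$ (where $v_1,\dots,v_k$ is its domain) and $\neg(i{:}f=v)\leftarrow i{:}f=w$ for $v\neq w$. For a stable model (answer set) $X$ of $P_\ell(B)$ let $\sigma_i(X)=\{f\mapsto o\mid (i{:}f=o)\in X\}$. The transition system $\mathit{TS}_{B}=(\mathcal{A},S,S_0,\delta)$ ($\mathcal{A}$ the action constants, transitions labelled by subsets of $\mathcal{A}$) has $S_0=\{\sigma_0(X)\mid X$ a stable model of $P_0(B)\}$, and $S,\delta$ are the least sets with $S_0\subseteq S$ such that whenever $X$ is a stable model of $P_{\ell+1}(B)$ for some $\ell\ge0$ with $\sigma_\ell(X)\in S$, then $\sigma_{\ell+1}(X)\in S$ and $(\sigma_\ell(X),\{a\mid (\ell{:}a)\in X\},\sigma_{\ell+1}(X))\in\delta$. **The encoding $\mathrm{bc}(W)$.** Fluents: for each $v\in\mathcal{V}'$ a fluent $v$ with domain $\mathrm{adm}(v)\cup\{\mathrm{null}\}$; for each $p\in P$ a Boolean fluent $p$; a Boolean fluent $\mathit{trans}$. Action constants: the transitions $t\in T$. Laws: ''$v=o$ after $v=o$ ifcons $v=o$'' for $v\in\mathcal{V}'$, $o\in\mathrm{adm}(v)\cup\{\mathrm{null}\}$;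 ''$p=o$ after $p=o$ ifcons $p=o$'' for $p\in P$, $o\in\{\mathrm{true},\mathrm{false}\}$; for each $t\in T$: ''$p=\mathrm{false}$ after $t$'' for $p\in{}^\bullet t\setminus t^\bullet$; ''$p=\mathrm{true}$ after $t$'' for $p\in t^\bullet\setminus{}^\bullet t$; ''$v=d$ after $t$ ifcons $v=d$'' for $d\in\mathrm{wr}(t)(v)$; ''$v=\mathrm{null}$ after $t$'' for $v$ with $\mathrm{wr}(t)(v)=\emptyset$; ''false after $t$ ifcons $v=d$'' for $v$ with $\mathrm{wr}(t)(v)\neq\emptyset$ and $d\in\{\mathrm{null}\}\cup\mathrm{adm}(v)\setminus\mathrm{wr}(t)(v)$; ''false after $t,s$'' for $t\neq s$; ''false after $t,p=\mathrm{false}$'' for $p\in{}^\bullet t$; ''$\mathit{trans}=\mathrm{true}$ after $t$''; ''initially $\mathit{start}=\mathrm{true}$'', ''initially $p=\mathrm{false}$'' for $p\neq\mathit{start}$, ''initially $v=\mathrm{null}$'' for $v\in\mathcal{V}'$, ''initially $\mathit{trans}=\mathrm{true}$''. Guards: a DNF characterisation of a guard $\Phi$ is a formula $\bigvee_{i=1}^k t^i_1\wedge\dots\wedge t^i_{\ell_i}$ equivalent to $\Phi$ over the data model, each term $t^i_j$ being of the form $v=o$ or $\neg\mathrm{def}(v)$; its translation replaces $v=o$ by the atom $v=o$ and $\neg\mathrm{def}(v)$ by $v=\mathrm{null}$ (write $[\![\cdot]\!]$). For each $t$ with $\mathrm{gd}(t)\not\equiv\mathit{true}$, taking such a characterisation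 of $\neg\mathrm{gd}(t)$, $\mathrm{bc}(W)$ contains ''false after $t,[\![t^i_1]\!],\dots,[\![t^i_{\ell_i}]\!]$'' for each $i=1,\dots,k$. *)

From mathcomp Require Import all_boot.
From Stdlib Require List.
Set Implicit Arguments. Unset Strict Implicit. Unset Printing Implicit Defensive.

Section LTS.
Variables (S L : Type).

Fixpoint chain (tr : S -> L -> S -> Prop) (s : S) (steps : seq (L * S)) : Prop :=
  match steps with
  | [::] => True
  | (l, s') :: r => tr s l s' /\ chain tr s' r
  end.

Definition is_path (init : S -> Prop) (tr : S -> L -> S -> Prop)
  (s0 : S) (steps : seq (L * S)) : Prop :=
  init s0 /\ chain tr s0 steps.
End LTS.

(* RG (states1 = its state set, init1, tr1) and TS (init2, tr2) are trace
   equivalent: an injective encoding of states and transitions of RG into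
   states and labels of TS satisfying conditions (1) and (2). *)
Definition trace_equiv (S1 L1 S2 L2 : Type)
  (states1 : S1 -> Prop) (init1 : S1 -> Prop) (tr1 : S1 -> L1 -> S1 -> Prop)
  (init2 : S2 -> Prop) (tr2 : S2 -> L2 -> S2 -> Prop) : Prop :=
  exists (encS : S1 -> S2) (encL : L1 -> L2),
    (forall s s', states1 s -> states1 s' -> encS s = encS s' -> s = s') /\
    (forall l l', encL l = encL l' -> l = l') /\
    (forall s0 steps, is_path init1 tr1 s0 steps ->
        is_path init2 tr2 (encS s0) [seq (encL p.1, encS p.2) | p <- steps]) /\
    (forall s0' steps', is_path init2 tr2 s0' steps' ->
        exists s0 steps, is_path init1 tr1 s0 steps /\ encS s0 = s0' /\
          [seq (encL p.1, encS p.2) | p <- steps] = steps').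

Section DataModel.
Variables (Var Val : eqType) (DomI : finType).

(* Domains Delta_i are indexed by the finite type DomI. *)
Record dataModel := DataModel {
  dset : DomI -> seq Val;
  dm   : Var -> DomI;
  ord  : DomI -> option (rel Val)
}.

Definition wf_dataModel (D : dataModel) : Prop :=
  (forall i, exists v, dm D v = i) /\
  (* Delta is a set of domains: distinct indices are distinct domains *)
  (forall i j, dset D i =i dset D j -> i = j) /\
  (forall i le, ord D i = Some le ->
     (forall x y, le x y -> (x \in dset D i) && (y \in dset D i)) /\
     (forall x, x \in dset D i -> le x x) /\
     (forall x y, le x y -> le y x -> x = y) /\
     (forall x y z, le x y -> le y z -> le x z)).

Inductive gterm := TVar (v : Var) | TCst (d : Val).

Inductive guard :=
  | GTrue
  | GDef (v : Var)
  | GEq (t1 t2 : gterm)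
  | GLe (t1 t2 : gterm)
  | GNot (g : guard)
  | GAnd (g1 g2 : guard).

Definition assignment := Var -> option Val.

Definition asg_ok (D : dataModel) (eta : assignment) : Prop :=
  forall v d, eta v = Some d -> d \in dset D (dm D v).

(* t[eta] when it is a domain value (None: t is a variable not assigned by eta) *)
Definition tval (eta : assignment) (t : gterm) : option Val :=
  match t with TVar v => eta v | TCst d => Some d end.

Fixpoint holds (D : dataModel) (eta : assignment) (g : guard) : Prop :=
  match g with
  | GTrue => True
  | GDef v => eta v <> None
  | GEq t1 t2 => exists d, tval eta t1 = Some d /\ tval eta t2 = Some d
  | GLe t1 t2 => exists d1 d2 i le,
      tval eta t1 = Some d1 /\ tval eta t2 = Some d2 /\
      d1 \in dset D i /\ d2 \in dset D i /\ ord D i = Some le /\ le d1 d2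
  | GNot g' => ~ holds D eta g'
  | GAnd g1 g2 => holds D eta g1 /\ holds D eta g2
  end.

Definition tconsts (t : gterm) : seq Val :=
  match t with TVar _ => [::] | TCst d => [:: d] end.

Fixpoint gconsts (g : guard) : seq Val :=
  match g with
  | GTrue | GDef _ => [::]
  | GEq t1 t2 | GLe t1 t2 => tconsts t1 ++ tconsts t2
  | GNot g' => gconsts g'
  | GAnd g1 g2 => gconsts g1 ++ gconsts g2
  end.

Definition toccurs (v : Var) (t : gterm) : bool :=
  match t with TVar u => u == v | TCst _ => false end.

Fixpoint goccurs (v : Var) (g : guard) : bool :=
  match g with
  | GTrue => false
  | GDef u => u == v
  | GEq t1 t2 | GLe t1 t2 => toccurs v t1 || toccurs v t2
  | GNot g' => goccurs v g'
  | GAnd g1 g2 => goccurs v g1 || goccurs v g2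
  end.

Definition guard_true (D : dataModel) (g : guard) : Prop :=
  forall eta, asg_ok D eta -> holds D eta g.

End DataModel.

Section DAWNet.
Variables (Var Val : eqType) (DomI Place Trans : finType).

Record dawnet := DAWNet {
  dmodel : dataModel Var Val DomI;
  pre  : Trans -> Place -> bool;      (* (p,t) in F, i.e. p in pre-set of t *)
  post : Trans -> Place -> bool;      (* (t,p) in F, i.e. p in post-set of t *)
  pstart : Place;
  psink : Place;
  wr : Trans -> Var -> option (seq Val);   (* wr(t) partial, wr(t)(v) a finite set *)
  gd : Trans -> guard Var Val
}.

Variable W : dawnet.

Definition wf_dawnet : Prop :=
  wf_dataModel (dmodel W) /\
  (forall t, ~~ post W t (pstart W)) /\
  (forall t v s, wr W t v = Some s -> forall d, d \in s -> d \in dset (dmodel W) (dm (dmodel W) v)) /\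
  (forall t d, d \in gconsts (gd W t) -> exists i, d \in dset (dmodel W) i).

Definition mstate := ((Place -> nat) * assignment Var Val)%type.

Definition valid_firing (s : mstate) (t : Trans) (s' : mstate) : Prop :=
  let: (M, eta) := s in let: (M', eta') := s' in
  (forall p, pre W t p -> 0 < M p) /\
  holds (dmodel W) eta (gd W t) /\
  (forall p, M' p = if pre W t p && ~~ post W t p then M p - 1
                   else if post W t p && ~~ pre W t p then M p + 1
                   else M p) /\
  (forall v, match wr W t v with
             | None => eta' v = eta v
             | Some [::] => eta' v = None
             | Some s => exists d, d \in s /\ eta' v = Some d
             end).

Definition init_state : mstate :=
  (fun p => if p == pstart W then 1 else 0, fun _ => None).

Inductive reachable : mstate -> Prop :=
  | reach0 : reachable init_state
  | reachS s t s' : reachable s -> valid_firing s t s' -> reachable s'.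

Definition RG_init (s : mstate) : Prop := s = init_state.

Definition RG_trans (s : mstate) (t : Trans) (s' : mstate) : Prop :=
  reachable s /\ valid_firing s t s'.

Definition one_safe : Prop :=
  forall s, reachable s -> forall p, s.1 p <= 1.

Definition inVp (v : Var) : bool :=
  [exists t, (wr W t v != None) || goccurs v (gd W t)].

Definition VarP := {v : Var | inVp v}.

Definition adm (v : Var) : seq Val :=
  flatten [seq odflt [::] (wr W t v) | t <- enum Trans].

End DAWNet.

Section BC.
Variables (F A Vl : Type).   (* fluent constants, action constants, values *)

Definition atom := (F * Vl)%type.   (* f = v *)

Record bcDesc := BCDesc {
  bdom : F -> seq Vl;
  (* static law  "h if b ifcons c"  (h = None means false) *)
  bstatic : option atom -> seq atom -> seq atom -> Prop;
  (* dynamic law "h after b ifcons c" *)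
  bdynamic : option atom -> seq (atom + A) -> seq atom -> Prop;
  binit : atom -> Prop
}.

(* ground atoms  i:f=v  and  i:a *)
Inductive gatom := GFl (i : nat) (f : F) (v : Vl) | GAct (i : nat) (a : A).
Inductive lit := LPos (g : gatom) | LNeg (g : gatom).
(* disjunctive rule  head <- pos, ~naf *)
Record rule := Rule { rhead : seq lit; rpos : seq lit; rnaf : seq lit }.

Definition gat (i : nat) (a : atom) : gatom := GFl i a.1 a.2.
Definition gaft (i : nat) (x : atom + A) : gatom :=
  match x with inl a => gat i a | inr a => GAct i a end.
Definition ghead (i : nat) (h : option atom) : seq lit :=
  match h with Some a => [:: LPos (gat i a)] | None => [::] end.

Definition prog (B : bcDesc) (l : nat) (r : rule) : Prop :=
  (exists h b c i, bstatic B h b c /\ i <= l /\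
     r = Rule (ghead i h) [seq LPos (gat i x) | x <- b] [seq LNeg (gat i x) | x <- c]) \/
  (exists h b c i, bdynamic B h b c /\ i < l /\
     r = Rule (ghead i.+1 h) [seq LPos (gaft i x) | x <- b] [seq LNeg (gat i.+1 x) | x <- c]) \/
  (exists a, binit B a /\ r = Rule [:: LPos (gat 0 a)] [::] [::]) \/
  (exists f v, List.In v (bdom B f) /\
     r = Rule [:: LPos (GFl 0 f v); LNeg (GFl 0 f v)] [::] [::]) \/
  (exists a i, i < l /\ r = Rule [:: LPos (GAct i a); LNeg (GAct i a)] [::] [::]) \/
  (exists f i, i <= l /\ r = Rule [::] [::] [seq LPos (GFl i f v) | v <- bdom B f]) \/
  (exists f v w i, i <= l /\ List.In v (bdom B f) /\ List.In w (bdom B f) /\ v <> w /\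
     r = Rule [:: LNeg (GFl i f v)] [:: LPos (GFl i f w)] [::]).

Definition consistent (X : lit -> Prop) : Prop :=
  forall g, ~ (X (LPos g) /\ X (LNeg g)).

(* Y is closed under the Gelfond-Lifschitz reduct P^X *)
Definition closed_reduct (P : rule -> Prop) (X Y : lit -> Prop) : Prop :=
  forall r, P r ->
    (forall L, List.In L (rnaf r) -> ~ X L) ->
    (forall L, List.In L (rpos r) -> Y L) ->
    exists L, List.In L (rhead r) /\ Y L.

Definition stable (P : rule -> Prop) (X : lit -> Prop) : Prop :=
  consistent X /\ closed_reduct P X X /\
  (forall Y, (forall L, Y L -> X L) -> closed_reduct P X Y -> forall L, X L -> Y L).

(* sigma_i(X) = { f |-> o | i:f=o in X }, as a relation *)
Definition bstate := F -> Vl -> Prop.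
Definition sigma (i : nat) (X : lit -> Prop) : bstate := fun f o => X (LPos (GFl i f o)).
Definition label (i : nat) (X : lit -> Prop) : A -> Prop := fun a => X (LPos (GAct i a)).

Definition TS_init (B : bcDesc) (s : bstate) : Prop :=
  exists X, stable (prog B 0) X /\ s = sigma 0 X.

Inductive TS_state (B : bcDesc) : bstate -> Prop :=
  | TSs0 X : stable (prog B 0) X -> TS_state B (sigma 0 X)
  | TSsS l X : stable (prog B l.+1) X -> TS_state B (sigma l X) ->
               TS_state B (sigma l.+1 X).

Definition TS_trans (B : bcDesc) (s : bstate) (lab : A -> Prop) (s' : bstate) : Prop :=
  exists l X, stable (prog B l.+1) X /\ TS_state B (sigma l X) /\
    s = sigma l X /\ lab = label l X /\ s' = sigma l.+1 X.

End BC.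

Section Encoding.
Variables (Var Val : eqType) (DomI Place Trans : finType).
Variable W : dawnet Var Val DomI Place Trans.

Inductive bcF := BFv (x : VarP W) | BFp (p : Place) | BFtrans.
Inductive bval := VNull | VD (d : Val) | VB (b : bool).

Definition bcdom (f : bcF) : seq bval :=
  match f with
  | BFv x => VNull :: [seq VD d | d <- adm W (sval x)]
  | _ => [:: VB true; VB false]
  end.

(* terms of a DNF characterisation: (v, Some o) is v = o, (v, None) is ~def(v) *)
Definition dlit := (VarP W * option Val)%type.

Definition dlit_holds (eta : assignment Var Val) (l : dlit) : Prop :=
  match l.2 with
  | Some o => eta (sval l.1) = Some o
  | None => eta (sval l.1) = None
  end.

Definition dnf_char (c : seq (seq dlit)) (g : guard Var Val) : Prop :=
  forall eta, asg_ok (dmodel W) eta ->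
    (holds (dmodel W) eta g <->
     exists cl, List.In cl c /\ forall l, List.In l cl -> dlit_holds eta l).

Definition trlit (l : dlit) : atom bcF bval :=
  match l.2 with Some o => (BFv l.1, VD o) | None => (BFv l.1, VNull) end.

Variable dnf : Trans -> seq (seq dlit).

Definition bc_dynamic (h : option (atom bcF bval)) (aft : seq (atom bcF bval + Trans))
  (ifc : seq (atom bcF bval)) : Prop :=
  (* inertia of variables *)
  (exists x o, List.In o (bcdom (BFv x)) /\
     h = Some (BFv x, o) /\ aft = [:: inl (BFv x, o)] /\ ifc = [:: (BFv x, o)]) \/
  (* inertia of places *)
  (exists p b, h = Some (BFp p, VB b) /\ aft = [:: inl (BFp p, VB b)] /\ ifc = [:: (BFp p, VB b)]) \/
  (exists t p, pre W t p && ~~ post W t p /\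
     h = Some (BFp p, VB false) /\ aft = [:: inr t] /\ ifc = [::]) \/
  (exists t p, post W t p && ~~ pre W t p /\
     h = Some (BFp p, VB true) /\ aft = [:: inr t] /\ ifc = [::]) \/
  (exists t x s d, wr W t (sval x) = Some s /\ d \in s /\
     h = Some (BFv x, VD d) /\ aft = [:: inr t] /\ ifc = [:: (BFv x, VD d)]) \/
  (exists t x, wr W t (sval x) = Some [::] /\
     h = Some (BFv x, VNull) /\ aft = [:: inr t] /\ ifc = [::]) \/
  (exists t x s o, wr W t (sval x) = Some s /\ s <> [::] /\
     (o = VNull \/ exists d, d \in adm W (sval x) /\ d \notin s /\ o = VD d) /\
     h = None /\ aft = [:: inr t] /\ ifc = [:: (BFv x, o)]) \/
  (exists t s, t <> s /\ h = None /\ aft = [:: inr t; inr s] /\ ifc = [::]) \/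
  (exists t p, pre W t p /\ h = None /\ aft = [:: inr t; inl (BFp p, VB false)] /\ ifc = [::]) \/
  (exists t, h = Some (BFtrans, VB true) /\ aft = [:: inr t] /\ ifc = [::]) \/
  (* guards *)
  (exists t cl, ~ guard_true (dmodel W) (gd W t) /\ List.In cl (dnf t) /\
     h = None /\ aft = inr t :: [seq inl (trlit l) | l <- cl] /\ ifc = [::]).

Definition bc_init (a : atom bcF bval) : Prop :=
  a = (BFp (pstart W), VB true) \/
  (exists p, p != pstart W /\ a = (BFp p, VB false)) \/
  (exists x, a = (BFv x, VNull)) \/
  a = (BFtrans, VB true).

Definition bc : bcDesc bcF Trans bval :=
  BCDesc bcdom (fun _ _ _ => False) bc_dynamic bc_init.

End Encoding.

(* A firing sequence s_0 -t_1-> s_1 ... -t_n-> s_n of W determines a set of literals of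
   P_n(bc(W)): at every step i the encoding of s_i, the action t_(i+1), and the classical
   negations of all other values and actions.  It is an answer set: every dynamic law of
   bc(W) is respected by a valid firing, and every value at step i+1 is derived by an effect
   or inertia law whose body holds at step i, which gives minimality by induction on i.
   Conversely, let X be an answer set of P_(l+1)(bc(W)) whose step-l state encodes a
   reachable state m.  Some action t occurs at step l (the only support of [trans]), it is
   unique, enabled and its guard holds (the constraints), and each step-(l+1) value is
   supported either by an effect of t or by inertia; so the step-(l+1) state encodes a
   successor of m under t.  Since 1-safety makes the Boolean encoding of markings
   injective, encoding states and sending t to the action set {t} is a trace equivalence. *)

From mathcomp Require Import all_boot.
From Stdlib Require Import Classical FunctionalExtensionality PropExtensionality.
From Stdlib Require Import IndefiniteDescription.
Set Implicit Arguments. Unset Strict Implicit. Unset Printing Implicit Defensive.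

Lemma InP (T : eqType) (x : T) (s : seq T) : reflect (List.In x s) (x \in s).
Proof.
apply: (iffP idP); elim: s => [|a s IH] //=; rewrite in_cons.
  by case/orP => [/eqP ->|/IH]; auto.
by case=> [->|/IH ->]; rewrite ?eqxx ?orbT.
Qed.

Notation GF i f v := (@GFl _ _ _ i f v).
Notation GA i a := (@GAct _ _ _ i a).
Notation GT i a := (@gat _ _ _ i a).
Notation GH i h := (@ghead _ _ _ i h).

Section AnswerSets.
Variables (F A Vl : Type) (B : bcDesc F A Vl).

Lemma stable_supported k X L : stable (prog B k) X -> X L ->
  exists2 r, prog B k r & [/\ List.In L (rhead r),
    forall L', List.In L' (rnaf r) -> ~ X L' & forall L', List.In L' (rpos r) -> X L'].
Proof.
move=> [_ [Xcl Xmin]] XL; apply: NNPP => unsupported.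
pose Y L' := X L' /\ L' <> L.
suff /(Xmin Y (fun _ H => H.1)) /(_ L XL) [] : closed_reduct (prog B k) X Y by [].
move=> r Pr naf pos.
have [L0 [L0r XL0]] := Xcl r Pr naf (fun L' H => (pos L' H).1).
have [EL0|] := classic (L0 = L); last by exists L0.
by case: unsupported; exists r => //; split=> [|//|L' /pos []//]; rewrite -EL0.
Qed.

Section Closure.
Variables (k : nat) (X Y : lit F A Vl -> Prop).
Hypothesis XYcl : closed_reduct (prog B k) X Y.

Let no_lit (P : lit F A Vl -> Prop) L : List.In L [::] -> P L := fun H => match H with end.

Lemma closed_dynamic h b c i : bdynamic B h b c -> i < k ->
  (forall a, List.In a c -> ~ X (LNeg (GT i.+1 a))) ->
  (forall x, List.In x b -> Y (LPos (gaft i x))) ->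
  exists L, List.In L (GH i.+1 h) /\ Y L.
Proof.
move=> law ik naf pos.
apply: (XYcl (r := Rule (GH i.+1 h) [seq LPos (gaft i x) | x <- b]
                                   [seq LNeg (GT i.+1 x) | x <- c])).
- by right; left; exists h, b, c, i.
- by move=> L /List.in_map_iff [a [<- /naf]].
- by move=> L /List.in_map_iff [x [<- /pos]].
Qed.

Lemma closed_constraint b c i : bdynamic B None b c -> i < k ->
  (forall a, List.In a c -> ~ X (LNeg (GT i.+1 a))) ->
  (forall x, List.In x b -> Y (LPos (gaft i x))) -> False.
Proof. by move=> law ik naf pos; case: (closed_dynamic law ik naf pos) => L []. Qed.

Lemma closed_effect a b c i : bdynamic B (Some a) b c -> i < k ->
  (forall a, List.In a c -> ~ X (LNeg (GT i.+1 a))) ->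
  (forall x, List.In x b -> Y (LPos (gaft i x))) -> Y (LPos (GT i.+1 a)).
Proof. by move=> law ik naf pos; case: (closed_dynamic law ik naf pos) => L [[<-|[]]]. Qed.

Lemma closed_initially a : binit B a -> Y (LPos (GT 0 a)).
Proof.
move=> init; have [|L [[<-|[]]//]] :=
  XYcl (r := Rule [:: LPos (GT 0 a)] [::] [::]) _ (@no_lit _) (@no_lit _).
by right; right; left; exists a.
Qed.

Lemma closed_fluent_choice f v : List.In v (bdom B f) ->
  Y (LPos (GF 0 f v)) \/ Y (LNeg (GF 0 f v)).
Proof.
move=> fv; have [|L [[<-|[<-|[]]] YL]] :=
  XYcl (r := Rule [:: LPos (GF 0 f v); LNeg (GF 0 f v)] [::] [::]) _ (@no_lit _) (@no_lit _); auto.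
by do 3 right; left; exists f, v.
Qed.

Lemma closed_action_choice a i : i < k -> Y (LPos (GA i a)) \/ Y (LNeg (GA i a)).
Proof.
move=> ik; have [|L [[<-|[<-|[]]] YL]] :=
  XYcl (r := Rule [:: LPos (GA i a); LNeg (GA i a)] [::] [::]) _ (@no_lit _) (@no_lit _); auto.
by do 4 right; left; exists a, i.
Qed.

Lemma closed_fluent_excl f v w i : i <= k ->
  List.In v (bdom B f) -> List.In w (bdom B f) -> v <> w ->
  Y (LPos (GF i f w)) -> Y (LNeg (GF i f v)).
Proof.
move=> ik fv fw vw Yw.
have [||L' [[<-|[]]//]] :=
  XYcl (r := Rule [:: LNeg (GF i f v)] [:: LPos (GF i f w)] [::]) _ (@no_lit _).
- by do 6 right; exists f, v, w, i.
- by move=> L' [<-|[]].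
Qed.

End Closure.

Lemma stable_value_exists k X f i : stable (prog B k) X -> i <= k ->
  exists2 v, List.In v (bdom B f) & X (LPos (GF i f v)).
Proof.
move=> [_ [Xcl _]] ik; apply: NNPP => none.
have [|L' /List.in_map_iff [v [<- fv]] XL'|L' []|L' [[]]] :=
  Xcl (Rule [::] [::] [seq LPos (GF i f v) | v <- bdom B f]).
- by do 5 right; left; exists f, i.
- by case: none; exists v.
Qed.

Lemma stable_value_uniq k X f v w i : stable (prog B k) X -> i <= k ->
  List.In v (bdom B f) -> List.In w (bdom B f) ->
  X (LPos (GF i f v)) -> X (LPos (GF i f w)) -> v = w.
Proof.
move=> [Xcons [Xcl _]] ik fv fw Xv Xw; apply: NNPP => vw.
by apply: (Xcons (GF i f v)); split=> //; apply: (closed_fluent_excl Xcl ik fv fw vw Xw).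
Qed.

Lemma stable_fluent_support k X i f o :
  (forall h b c, ~ bstatic B h b c) -> stable (prog B k) X -> X (LPos (GF i f o)) ->
  [/\ i = 0 & binit B (f, o) \/ List.In o (bdom B f)] \/
  exists j b c, [/\ i = j.+1, bdynamic B (Some (f, o)) b c &
                    forall x, List.In x b -> X (LPos (gaft j x))].
Proof.
move=> nostatic Xst XL; have [r Pr [Lr _ pos]] := stable_supported Xst XL.
case: Pr => [[h [b [c [j [/nostatic]]]]]//|].
case=> [[h [b [c [j [law [_ Er]]]]]]|].
  subst r; move: pos => /= pos; case: h law Lr => [[f' o']|] law //= [[<- <- <-]|[]].
  right; exists j, b, c; split=> // x bx.
  by apply: pos; apply/List.in_map_iff; exists x.
case=> [[[f' o'] [init Er]]|].
  by subst r; case: Lr => [[<- <- <-]|[]]; left; split=> //; left.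
case=> [[f' [v [fv Er]]]|].
  by subst r; case: Lr => [[<- <- <-]|[|[]]]; left; split=> //; right.
case=> [[a [j [_ Er]]]|]; first by subst r; case: Lr => [|[|[]]].
case=> [[f' [j [_ Er]]]|]; first by subst r.
by case=> [f' [v [w [j [_ [_ [_ [_ Er]]]]]]]]; subst r; case: Lr => [|[]].
Qed.

Lemma stable_fluent_supported k X i f o :
  (forall h b c, ~ bstatic B h b c) -> stable (prog B k) X -> X (LPos (GF i.+1 f o)) ->
  exists b c, bdynamic B (Some (f, o)) b c /\ forall x, List.In x b -> X (LPos (gaft i x)).
Proof.
move=> nostatic Xst /(stable_fluent_support nostatic Xst) [[]//|[j [b [c [[<-] law body]]]]].
by exists b, c.
Qed.

Lemma stable_value_in_dom k X i f o :
  (forall h b c, ~ bstatic B h b c) ->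
  (forall f o b c, bdynamic B (Some (f, o)) b c -> List.In o (bdom B f)) ->
  (forall f o, binit B (f, o) -> List.In o (bdom B f)) ->
  stable (prog B k) X -> X (LPos (GF i f o)) -> List.In o (bdom B f).
Proof.
move=> nostatic law_dom init_dom Xst /(stable_fluent_support nostatic Xst).
by case=> [[_ [/init_dom|]]|[j [b [c [_ /law_dom]]]]].
Qed.

End AnswerSets.

Definition enc_label (A : Type) (a : A) : A -> Prop := fun a' => a' = a.

Lemma enc_label_inj (A : Type) : injective (@enc_label A).
Proof. by move=> a a' /(congr1 (@^~ a)); rewrite /enc_label => <-. Qed.

Section Encoding.
Variables (Var Val : eqType) (DomI Place Trans : finType).
Variable W : dawnet Var Val DomI Place Trans.
Variable dnf : Trans -> seq (seq (dlit W)).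
Hypothesis wfW : wf_dawnet W.
Hypothesis safeW : one_safe W.
Hypothesis dnfW :
  forall t, ~ guard_true (dmodel W) (gd W t) -> dnf_char (dnf t) (GNot (gd W t)).

Local Notation B := (bc dnf).
Local Notation state := (mstate Var Val Place).
Local Notation fluent := (bcF W).
Local Notation value := (bval Val).
Local Notation VNull := (@VNull Val).
Local Notation VB b := (@VB Val b).
Local Notation BP p := (BFp W p).
Local Notation BT := (BFtrans W).

Definition fire_marking (t : Trans) (M : Place -> nat) (p : Place) : nat :=
  if pre W t p && ~~ post W t p then M p - 1
  else if post W t p && ~~ pre W t p then M p + 1 else M p.

Definition written (t : Trans) (eta : assignment Var Val) (v : Var) (o : option Val) : Prop :=
  match wr W t v with
  | None => o = eta v
  | Some [::] => o = None
  | Some s => exists d, d \in s /\ o = Some d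
  end.

Lemma valid_firingP s t s' : valid_firing W s t s' <->
  [/\ forall p, pre W t p -> 0 < s.1 p, holds (dmodel W) s.2 (gd W t),
      s'.1 =1 fire_marking t s.1 & forall v, written t s.2 v (s'.2 v)].
Proof. by case: s s' => [M eta] [M' eta']; split=> [[? [? [? ?]]]|[]]. Qed.

Lemma adm_wr t v s d : wr W t v = Some s -> d \in s -> d \in adm W v.
Proof.
move=> tv ds; apply/flattenP; exists s => //.
by apply/mapP; exists t; rewrite ?mem_enum ?tv.
Qed.

Lemma inVp_wr v t s : wr W t v = Some s -> inVp W v.
Proof. by move=> tv; apply/existsP; exists t; rewrite tv. Qed.

Lemma wr_notin_Vp v t : ~~ inVp W v -> wr W t v = None.
Proof. by case tv: (wr W t v) => [s|] // /negP[]; apply: inVp_wr tv. Qed.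

Definition wf_assignment (eta : assignment Var Val) : Prop :=
  [/\ forall v, ~~ inVp W v -> eta v = None,
      forall v d, eta v = Some d -> d \in adm W v & asg_ok (dmodel W) eta].

Lemma reachable_wf s : reachable W s -> wf_assignment s.2.
Proof.
elim=> [|s1 t s2 _ [out adm_ok dm_ok] /valid_firingP [_ _ _ wr_ok]]; first by [].
have [_ [_ [wr_dm _]]] := wfW.
split=> [v vVp|v d|v d]; have := wr_ok v; rewrite /written.
- by rewrite (wr_notin_Vp t vVp) => ->; apply: out.
- case tv: (wr W t v) => [[|d0 s0]|]; [by move=> ->|move=> [d' [d's ->]] [<-]|by move=> -> /adm_ok].
  exact: adm_wr tv d's.
- case tv: (wr W t v) => [[|d0 s0]|]; [by move=> ->|move=> [d' [d's ->]] [<-]|by move=> -> /dm_ok].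
  exact: wr_dm tv _ d's.
Qed.

Definition enc_opt (o : option Val) : value := if o is Some d then VD d else VNull.

Definition enc_fluent (s : state) (f : fluent) : value :=
  match f with
  | BFv x => enc_opt (s.2 (sval x))
  | BFp p => VB (0 < s.1 p)
  | BFtrans => VB true
  end.

Definition enc_state (s : state) : bstate fluent value := fun f o => o = enc_fluent s f.

Lemma bcdom_var (x : VarP W) o : List.In o (bcdom (BFv x)) ->
  o = VNull \/ exists2 d, d \in adm W (sval x) & o = VD d.
Proof. by case=> [<-|/List.in_map_iff [d [<- /InP]]]; [left|right; exists d]. Qed.

Lemma bcdom_VD (x : VarP W) d : d \in adm W (sval x) -> List.In (VD d) (bcdom (BFv x)).
Proof. by move=> dx; right; apply/List.in_map_iff; exists d; split=> //; apply/InP. Qed.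

Lemma enc_fluent_dom s f : reachable W s -> List.In (enc_fluent s f) (bcdom f).
Proof.
move=> /reachable_wf [_ adm_ok _]; case: f => [x|p|] /=; last 2 first.
- by case: (0 < s.1 p); [left|right; left].
- by left.
case xs: (s.2 (sval x)) => [d|]; last by left.
by apply: bcdom_VD; apply: adm_ok xs.
Qed.

(* 1-safety is what makes the Boolean place fluents a faithful encoding of markings. *)
Lemma enc_place_next s t s' p : reachable W s -> valid_firing W s t s' ->
  enc_fluent s' (BP p) =
    if pre W t p != post W t p then VB (post W t p) else enc_fluent s (BP p).
Proof.
move=> sR /valid_firingP [enabled _ M' _] /=; rewrite M' /fire_marking.
case: (pre W t p) (enabled p) (safeW sR p) => [/(_ isT)|_ _]; case: (post W t p) => //=.
  by case: (s.1 p) => [|[|]].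
by rewrite addn1.
Qed.

Lemma enc_state_inj s s' : reachable W s -> reachable W s' ->
  enc_state s = enc_state s' -> s = s'.
Proof.
case: s s' => [M eta] [M' eta'] sR s'R E.
have {}E f : enc_fluent (M, eta) f = enc_fluent (M', eta') f.
  by have := equal_f (equal_f E f) (enc_fluent (M, eta) f); rewrite /enc_state => <-.
have [out _ _] := reachable_wf sR; have [out' _ _] := reachable_wf s'R.
congr pair; apply: functional_extensionality.
  move=> p; have [] := E (BP p); move: (safeW sR p) (safeW s'R p) => /=.
  by case: (M p) => [|[|]]; case: (M' p) => [|[|]].
move=> v; have [vVp|vVp] := boolP (inVp W v); last by move: (out v vVp) (out' v vVp) => /= -> ->.
move: (E (BFv (exist _ v vVp))) => /=.
by case: (eta v) => [d|]; case: (eta' v) => [d'|] //= [->].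
Qed.

Lemma bc_effect_law_cases f o b c : bc_dynamic dnf (Some (f, o)) b c ->
  [/\ b = [:: inl (f, o)], c = [:: (f, o)], List.In o (bcdom f) & f <> BT] \/
  exists2 t, b = [:: inr t] & [\/
    exists p, [/\ f = BP p, pre W t p != post W t p, o = VB (post W t p) & c = [::]],
    exists x w d, [/\ f = BFv x, wr W t (sval x) = Some w, d \in w, o = VD d & c = [:: (f, o)]],
    exists x, [/\ f = BFv x, wr W t (sval x) = Some [::], o = VNull & c = [::]] |
    [/\ f = BT, o = VB true & c = [::]]].
Proof.
case=> [[x [o' [xo' [[-> ->] [-> ->]]]]]|]; first by left.
case=> [[p [bb [[-> ->] [-> ->]]]]|].
  by left; split=> //; case: bb; [left|right; left].
case=> [[t [p [/andP [pt /negbTE qt] [[-> ->] [-> ->]]]]]|].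
  by right; exists t => //; apply: Or41; exists p; rewrite pt qt.
case=> [[t [p [/andP [qt /negbTE pt] [[-> ->] [-> ->]]]]]|].
  by right; exists t => //; apply: Or41; exists p; rewrite pt qt.
case=> [[t [x [w [d [tx [dw [[-> ->] [-> ->]]]]]]]]|].
  by right; exists t => //; apply: Or42; exists x, w, d.
case=> [[t [x [tx [[-> ->] [-> ->]]]]]|].
  by right; exists t => //; apply: Or43; exists x.
case=> [[t [x [s [o' [_ [_ [_ [E _]]]]]]]]|]; first by [].
case=> [[t [t' [_ [E _]]]]|]; first by [].
case=> [[t [p [_ [E _]]]]|]; first by [].
case=> [[t [[-> ->] [-> ->]]]|]; first by right; exists t => //; apply: Or44.
by case=> [t [cl [_ [_ [E _]]]]].
Qed.

Lemma bc_constraint_cases b c : bc_dynamic dnf None b c -> [\/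
  exists t x s o, [/\ wr W t (sval x) = Some s, s <> [::],
    o = VNull \/ (exists d, d \in adm W (sval x) /\ d \notin s /\ o = VD d),
    b = [:: inr t] & c = [:: (BFv x, o)]],
  exists t t', [/\ t <> t', b = [:: inr t; inr t'] & c = [::]],
  exists t p, [/\ pre W t p, b = [:: inr t; inl (BP p, VB false)] & c = [::]] |
  exists t cl, [/\ ~ guard_true (dmodel W) (gd W t), List.In cl (dnf t),
    b = inr t :: [seq inl (trlit l) | l <- cl] & c = [::]]].
Proof.
case=> [[x [o [_ [E _]]]]|]; first by [].
case=> [[p [bb [E _]]]|]; first by [].
case=> [[t [p [_ [E _]]]]|]; first by [].
case=> [[t [p [_ [E _]]]]|]; first by [].
case=> [[t [x [s [d [_ [_ [E _]]]]]]]|]; first by [].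
case=> [[t [x [_ [E _]]]]|]; first by [].
case=> [[t [x [s [o [tx [s0 [od [_ [-> ->]]]]]]]]]|].
  by apply: Or41; exists t, x, s, o.
case=> [[t [t' [tt' [_ [-> ->]]]]]|]; first by apply: Or42; exists t, t'.
case=> [[t [p [pt [_ [-> ->]]]]]|]; first by apply: Or43; exists t, p.
case=> [[t [E _]]|]; first by [].
by case=> [t [cl [ng [dcl [_ [-> ->]]]]]]; apply: Or44; exists t, cl.
Qed.

Lemma bc_place_effect t p : pre W t p != post W t p ->
  bc_dynamic dnf (Some (BP p, VB (post W t p))) [:: inr t] [::].
Proof.
case pt: (pre W t p); case qt: (post W t p) => // _.
  by do 2 right; left; exists t, p; rewrite pt qt.
by do 3 right; left; exists t, p; rewrite pt qt.
Qed.

Lemma bc_value_dom k X i f o : stable (prog B k) X -> X (LPos (GF i f o)) ->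
  List.In o (bcdom f).
Proof.
move=> Xst Xo; apply: (stable_value_in_dom _ _ _ Xst Xo) => [h b c []|f' o' b c|f' o'].
- case/bc_effect_law_cases=> [[_ _ ? _]//|[t _ [[p [-> _ -> _]]|[x [w [d [-> tx dw -> _]]]]|
    [x [-> _ -> _]]|[-> -> _]]]]; [|exact/bcdom_VD/(adm_wr tx dw)|by left|by left].
  by case: (post W t p); [left|right; left].
by case=> [[-> ->]|[[p [_ [-> ->]]]|[[x [-> ->]]|[-> ->]]]]; [left|right; left|left|left].
Qed.

Lemma bc_value_uniq k X i f o o' : stable (prog B k) X -> i <= k ->
  X (LPos (GF i f o)) -> X (LPos (GF i f o')) -> o = o'.
Proof.
move=> Xst ik Xo Xo'.
exact: (stable_value_uniq Xst ik (bc_value_dom Xst Xo) (bc_value_dom Xst Xo') Xo Xo').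
Qed.

Lemma sigma_enc_state k X i s : stable (prog B k) X -> i <= k ->
  (forall f, X (LPos (GF i f (enc_fluent s f)))) -> sigma i X = enc_state s.
Proof.
move=> Xst ik Xs; apply: functional_extensionality => f.
apply: functional_extensionality => o; apply: propositional_extensionality.
by split=> [Xo|->]; [apply: bc_value_uniq Xst ik Xo (Xs f)|apply: Xs].
Qed.

Definition body_holds (s : state) (t : Trans) (x : atom fluent value + Trans) : Prop :=
  match x with inl (f, o) => o = enc_fluent s f | inr a => a = t end.

(* In the intended answer sets, [~ (f = o)] holds exactly for the domain values [o] of [f]
   other than the current one. *)
Definition ifcons_holds (s : state) (a : atom fluent value) : Prop :=
  List.In a.2 (bcdom a.1) -> a.2 = enc_fluent s a.1.

Section Firing.
Variables (s : state) (t : Trans) (s' : state).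
Hypotheses (sR : reachable W s) (fire : valid_firing W s t s').

Lemma firing_respects_constraints b c : bc_dynamic dnf None b c ->
  (forall x, List.In x b -> body_holds s t x) ->
  (forall a, List.In a c -> ifcons_holds s' a) -> False.
Proof.
have [enabled gdt _ wrt] := (valid_firingP _ _ _).1 fire.
case/bc_constraint_cases=> [[t' [x [w [o [tx w0 od -> ->]]]]]|[t1 [t2 [t12 -> _]]]|
  [t' [p [pt -> _]]]|[t' [cl [ng dcl -> _]]]] body ifc.
- have /= t't := body _ (or_introl erefl); subst t'.
  have o_dom : List.In o (bcdom (BFv x)).
    by case: od => [->|[d [dx [_ ->]]]]; [left|apply: bcdom_VD].
  have /= := ifc _ (or_introl erefl) o_dom; have := wrt (sval x); rewrite /written tx.
  case: w tx w0 od => [|d0 w] // _ _ od [d [dw ->]] od'.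
  by case: od => [|[d' [_ [dw' ]]]]; rewrite od' // => -[dd']; rewrite -dd' dw in dw'.
- by apply: t12; rewrite (body _ (or_introl erefl)) (body _ (or_intror (or_introl erefl))).
- have /= t't := body _ (or_introl erefl); subst t'.
  by have /= [] := body _ (or_intror (or_introl erefl)); rewrite enabled.
- have /= t't := body _ (or_introl erefl); subst t'.
  have [_ _ sok] := reachable_wf sR.
  apply: (proj2 (dnfW ng sok) _ gdt); exists cl; split=> // -[x o] xo.
  have xcl : List.In (inl (trlit (x, o))) [seq inl (trlit l) : _ + Trans | l <- cl].
    by apply/List.in_map_iff; exists (x, o).
  have := body _ (or_intror xcl); rewrite /dlit_holds /trlit.
  by case: o {xo xcl} => [d|] /=; case: (s.2 (sval x)) => [d'|] //= [->].
Qed.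

Lemma firing_respects_effects f o b c : bc_dynamic dnf (Some (f, o)) b c ->
  (forall x, List.In x b -> body_holds s t x) ->
  (forall a, List.In a c -> ifcons_holds s' a) -> o = enc_fluent s' f.
Proof.
have [_ _ _ wrt] := (valid_firingP _ _ _).1 fire.
case/bc_effect_law_cases=> [[-> -> odom _]|[t' -> law]] body ifc.
  exact: ifc _ (or_introl erefl) odom.
have /= t't := body _ (or_introl erefl); subst t'.
case: law => [[p [-> pq -> _]]|[x [w [d [-> tx dw -> Ec]]]]|[x [-> tx -> _]]|[-> -> _]] //.
- by rewrite (enc_place_next p sR fire) pq.
- apply: (ifc (BFv x, VD d)); first by rewrite Ec; left.
  exact/bcdom_VD/(adm_wr tx dw).
- by have := wrt (sval x); rewrite /written tx /= => ->.
Qed.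

Lemma firing_justified f : exists b c,
  [/\ bc_dynamic dnf (Some (f, enc_fluent s' f)) b c,
      forall x, List.In x b -> body_holds s t x &
      forall a, List.In a c -> a.2 = enc_fluent s' a.1].
Proof.
have [_ _ _ wrt] := (valid_firingP _ _ _).1 fire.
have by_t x : List.In x [:: inr t] -> body_holds s t x by case=> [<-|[]].
case: f => [x|p|]; last first.
- by exists [:: inr t], [::]; split=> //; do 9 right; left; exists t.
- rewrite (enc_place_next p sR fire); case: ifP => pq.
    by exists [:: inr t], [::]; split=> //; apply: bc_place_effect.
  exists [:: inl (BP p, enc_fluent s (BP p))], [:: (BP p, enc_fluent s (BP p))].
  split=> [|x [<-|[]]|a [<-|[]]] //; last by rewrite (enc_place_next p sR fire) pq.
  by right; left; exists p, (0 < s.1 p).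
have := wrt (sval x); rewrite /written; case tx: (wr W t (sval x)) => [[|d0 w]|].
- move=> /= ->; exists [:: inr t], [::]; split=> //.
  by do 5 right; left; exists t, x.
- move=> [d [dw E]]; exists [:: inr t], [:: (BFv x, VD d)].
  split=> [||a [<-|[]]] //=; rewrite E //.
  by do 4 right; left; exists t, x, (d0 :: w), d.
- move=> E; have Ex : enc_fluent s' (BFv x) = enc_fluent s (BFv x) by rewrite /= E.
  rewrite Ex; exists [:: inl (BFv x, enc_fluent s (BFv x))], [:: (BFv x, enc_fluent s (BFv x))].
  split=> [|y [<-|[]]|a [<-|[]]] //.
  by left; exists x, (enc_fluent s (BFv x)); split=> //; apply: enc_fluent_dom.
Qed.

End Firing.

Lemma bc_initP f o : bc_init (f, o) <-> o = enc_fluent (init_state W) f.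
Proof.
split=> [|->].
  by case=> [[-> ->]|[[p [/negbTE pp [-> ->]]]|[[x [-> ->]]|[-> ->]]]]; rewrite //= ?eqxx ?pp.
case: f => [x|p|] /=; [by right; right; left; exists x| |by right; right; right].
by have [->|pp] := eqVneq p (pstart W); [left|right; left; exists p].
Qed.

Definition is_run (n : nat) (st : nat -> state) (ac : nat -> option Trans) : Prop :=
  st 0 = init_state W /\
  forall i, i < n -> exists t, ac i = Some t /\ valid_firing W (st i) t (st i.+1).

Definition run_model n (st : nat -> state) (ac : nat -> option Trans) :
    lit fluent Trans value -> Prop := fun L =>
  match L with
  | LPos (GFl i f o) => i <= n /\ o = enc_fluent (st i) f
  | LNeg (GFl i f o) => i <= n /\ List.In o (bcdom f) /\ o <> enc_fluent (st i) f
  | LPos (GAct i a) => i < n /\ ac i = Some a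
  | LNeg (GAct i a) => i < n /\ ac i <> Some a
  end.

Section Run.
Variables (n : nat) (st : nat -> state) (ac : nat -> option Trans).
Hypothesis run : is_run n st ac.
Local Notation X := (run_model n st ac).

Lemma run_reachable i : i <= n -> reachable W (st i).
Proof.
elim: i => [|i IH] ilt; first by rewrite run.1; constructor.
by have [t [_ fire]] := run.2 i ilt; apply: reachS (IH (ltnW ilt)) fire.
Qed.

Lemma run_model_consistent : consistent X.
Proof. by case=> [i f o|i a] [[_ E] [_ ne]]; [apply: ne.2 E|apply: ne E]. Qed.

Lemma run_model_closed_dynamic h b c i : bc_dynamic dnf h b c -> i < n ->
  (forall a, List.In a c -> ~ X (LNeg (GT i.+1 a))) ->
  (forall x, List.In x b -> X (LPos (gaft i x))) ->
  exists L, List.In L (GH i.+1 h) /\ X L.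
Proof.
move=> law ilt naf pos; have [t [ac_i fire]] := run.2 i ilt.
have body x : List.In x b -> body_holds (st i) t x.
  by move/pos; case: x => [[f o]|a] [] //; rewrite ac_i => _ [].
have ifc a : List.In a c -> ifcons_holds (st i.+1) a.
  by case: a => f o /naf Xa odom; apply: NNPP => ne; apply: Xa.
have sR := run_reachable (ltnW ilt).
case: h law => [[f o]|] law; last by case: (firing_respects_constraints sR fire law body ifc).
exists (LPos (GT i.+1 (f, o))); split; first by left.
by split=> //; exact: (firing_respects_effects sR fire law body ifc).
Qed.

Lemma run_model_closed : closed_reduct (prog B n) X X.
Proof.
move=> r Pr naf pos; case: Pr => [[h [b [c [i [[] _]]]]]|].
case=> [[h [b [c [i [law [ilt Er]]]]]]|].
  subst r; apply: (run_model_closed_dynamic law ilt) => [a ca|x bx].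
    by apply: naf; apply/List.in_map_iff; exists a.
  by apply: pos; apply/List.in_map_iff; exists x.
case=> [[[f o] [init ->]]|].
  exists (LPos (GT 0 (f, o))); split; first by left.
  by split; rewrite // run.1; apply: (bc_initP _ _).1.
case=> [[f [v [fv ->]]]|].
  have [E|ne] := classic (v = enc_fluent (st 0) f).
    by exists (LPos (GF 0 f v)); split; [left|].
  by exists (LNeg (GF 0 f v)); split; [right; left|].
case=> [[a [i [ilt ->]]]|].
  have [E|ne] := classic (ac i = Some a).
    by exists (LPos (GA i a)); split; [left|].
  by exists (LNeg (GA i a)); split; [right; left|].
case=> [[f [i [ilt Er]]]|].
  subst r; case: (naf (LPos (GF i f (enc_fluent (st i) f)))) => //.
  apply/List.in_map_iff; exists (enc_fluent (st i) f).
  by split=> //; apply/enc_fluent_dom/run_reachable.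
case=> [f [v [w [i [ilt [fv [_ [vw Er]]]]]]]]; subst r.
have [_ Ew] := pos (LPos (GF i f w)) (or_introl erefl).
by exists (LNeg (GF i f v)); split; [left|do 2 split=> //; rewrite -Ew].
Qed.

Lemma run_model_minimal Y : (forall L, Y L -> X L) -> closed_reduct (prog B n) X Y ->
  forall L, X L -> Y L.
Proof.
move=> YX Ycl.
have decided g : Y (LPos g) \/ Y (LNeg g) ->
    (X (LPos g) -> Y (LPos g)) /\ (X (LNeg g) -> Y (LNeg g)).
  case=> Yg; split=> // Xg; exfalso.
    exact: run_model_consistent (conj (YX _ Yg) Xg).
  exact: run_model_consistent (conj Xg (YX _ Yg)).
have Yact i a : i < n -> (X (LPos (GA i a)) -> Y (LPos (GA i a))) /\
                         (X (LNeg (GA i a)) -> Y (LNeg (GA i a))).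
  by move=> ilt; apply/decided/(closed_action_choice Ycl a ilt).
have Yfl i f : i <= n -> Y (LPos (GF i f (enc_fluent (st i) f))).
  elim: i f => [|i IH] f ilt.
    by case: (closed_fluent_choice Ycl (enc_fluent_dom f (run_reachable ilt))) => // /YX [_ []].
  have [t [ac_i fire]] := run.2 i ilt.
  have [b [c [law body ifc]]] := firing_justified (run_reachable (ltnW ilt)) fire f.
  apply: (closed_effect Ycl law ilt) => [a /ifc ea [_ []]|[[f' o]|a] /body /= ->] //.
    exact: IH (ltnW ilt).
  by apply: (Yact i t ilt).1.
case=> [[i f o|i a]|[i f o|i a]] XL.
- by case: XL => ilt ->; apply: Yfl.
- exact: (Yact i a XL.1).1.
- have [ilt [odom ne]] := XL.
  exact: (closed_fluent_excl Ycl ilt odom (enc_fluent_dom f (run_reachable ilt)) ne (Yfl i f ilt)).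
- exact: (Yact i a XL.1).2.
Qed.

Lemma run_model_stable : stable (prog B n) X.
Proof.
split; first exact: run_model_consistent.
by split; [apply: run_model_closed|apply: run_model_minimal].
Qed.

Lemma sigma_run_model i : i <= n -> sigma i X = enc_state (st i).
Proof.
move=> ilt; apply: functional_extensionality => f; apply: functional_extensionality => o.
by apply: propositional_extensionality; split=> [[]|].
Qed.

Lemma label_run_model i t : i < n -> ac i = Some t -> label i X = enc_label t.
Proof.
move=> ilt ac_i; apply: functional_extensionality => a.
by apply: propositional_extensionality; rewrite /label /enc_label /= ac_i; split=> [[_ []]|->].
Qed.

End Run.

Lemma is_run_prefix n st ac : is_run n.+1 st ac -> is_run n st ac.
Proof. by case=> st0 steps; split=> // i ilt; apply/steps/leqW. Qed.

Lemma is_run_snoc n st ac t s' : is_run n st ac -> valid_firing W (st n) t s' ->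
  is_run n.+1 (fun i => if i == n.+1 then s' else st i)
              (fun i => if i == n then Some t else ac i).
Proof.
move=> [st0 steps] fire; split=> // i; rewrite ltnS leq_eqVlt eqSS.
case/predU1P=> [->|ilt]; first by exists t; rewrite eqxx ltn_eqF.
have [t' [ac_i fire']] := steps i ilt.
by exists t'; rewrite !ltn_eqF // ltnW.
Qed.

Lemma run_TS_state n st ac : is_run n st ac -> TS_state B (enc_state (st n)).
Proof.
elim: n st ac => [|n IH] st ac run; rewrite -(sigma_run_model st ac (leqnn _)).
  exact/TSs0/run_model_stable.
apply: TSsS; first exact: run_model_stable.
by rewrite (sigma_run_model st ac (leqnSn n)); apply: IH (is_run_prefix run).
Qed.

Lemma run_TS_trans n st ac t : is_run n.+1 st ac -> ac n = Some t ->
  TS_trans B (enc_state (st n)) (enc_label t) (enc_state (st n.+1)).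
Proof.
move=> run ac_n; exists n, (run_model n.+1 st ac).
rewrite (sigma_run_model st ac (leqnSn n)) (sigma_run_model st ac (leqnn _)).
split; first exact: run_model_stable.
split; first exact: run_TS_state (is_run_prefix run).
by rewrite (label_run_model st (ltnSn n) ac_n).
Qed.

Lemma run_chain n st ac steps : is_run n st ac -> chain (@RG_trans _ _ _ _ _ W) (st n) steps ->
  chain (TS_trans B) (enc_state (st n)) [seq (enc_label p.1, enc_state p.2) | p <- steps].
Proof.
elim: steps n st ac => [|[t s'] steps IH] n st ac run //= [[_ fire] next].
have run' := is_run_snoc run fire.
set st' := fun i => if i == n.+1 then s' else st i in run'.
have st'n : st' n = st n by rewrite /st' ltn_eqF.
have st'n1 : st' n.+1 = s' by rewrite /st' eqxx.
split; last by rewrite -st'n1; apply: IH run' _; rewrite st'n1.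
by rewrite -st'n -st'n1; apply: run_TS_trans run' _; rewrite eqxx.
Qed.

Definition affects (t : Trans) (f : fluent) : bool :=
  match f with
  | BFv x => wr W t (sval x) != None
  | BFp p => pre W t p != post W t p
  | BFtrans => true
  end.

Section Step.
Variables (l : nat) (X : lit fluent Trans value -> Prop) (m : state).
Hypotheses (Xst : stable (prog B l.+1) X) (mR : reachable W m) (Xm : sigma l X = enc_state m).

Let Xcl : closed_reduct (prog B l.+1) X X := Xst.2.1.
Let no_static h b c : ~ bstatic B h b c := id.

Lemma current_valueP f o : X (LPos (GF l f o)) <-> o = enc_fluent m f.
Proof. by have := equal_f (equal_f Xm f) o; rewrite /sigma /enc_state => ->. Qed.

Lemma fired_uniq t t' : X (LPos (GA l t)) -> X (LPos (GA l t')) -> t = t'.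
Proof.
move=> Xt Xt'; apply: NNPP => tt'.
have law : bc_dynamic dnf None [:: inr t; inr t'] [::] by do 7 right; left; exists t, t'.
by apply: (closed_constraint Xcl law (ltnSn l)) => [a []|x [<-|[<-|[]]]].
Qed.

Lemma fired_exists : exists t, X (LPos (GA l t)).
Proof.
have [o _ Xo] := stable_value_exists BT Xst (leqnn l.+1).
have [b [c [law body]]] := stable_fluent_supported no_static Xst Xo.
case: (bc_effect_law_cases law) => [[_ _ _ /(_ erefl) []]|[t Eb _]].
by exists t; apply: (body (inr t)); rewrite Eb; left.
Qed.

Variable t : Trans.
Hypothesis Xt : X (LPos (GA l t)).

Lemma fired_enabled p : pre W t p -> 0 < m.1 p.
Proof.
move=> pt; apply/negP => /negP mp.
have law : bc_dynamic dnf None [:: inr t; inl (BP p, VB false)] [::].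
  by do 8 right; left; exists t, p.
apply: (closed_constraint Xcl law (ltnSn l)) => [a []|x [<-|[<-|[]]]] //.
by apply/current_valueP; rewrite /= (negbTE mp).
Qed.

Lemma fired_guard : holds (dmodel W) m.2 (gd W t).
Proof.
apply: NNPP => ng; have [_ _ mok] := reachable_wf mR.
have ngt : ~ guard_true (dmodel W) (gd W t) by move=> gt; apply/ng/gt.
have [cl [dcl lits]] := (dnfW ngt mok).1 ng.
have law : bc_dynamic dnf None (inr t :: [seq inl (trlit d) | d <- cl]) [::].
  by do 10 right; exists t, cl.
apply: (closed_constraint Xcl law (ltnSn l)) =>
  [a []|x [<-|/List.in_map_iff [[y o] [<- /lits]]]] //.
by rewrite /dlit_holds /trlit; case: o => [d|] /= E; apply/current_valueP; rewrite /= E.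
Qed.

Lemma next_frame f : ~~ affects t f -> X (LPos (GF l.+1 f (enc_fluent m f))).
Proof.
move=> unaffected; have [o _ Xo] := stable_value_exists f Xst (leqnn l.+1).
have [b [c [law body]]] := stable_fluent_supported no_static Xst Xo.
case: (bc_effect_law_cases law) => [[Eb _ _ _]|[t' Eb eff]]; rewrite Eb in body.
  by have /current_valueP <- := body _ (or_introl erefl).
have t't := fired_uniq Xt (body _ (or_introl erefl)); subst t'.
case/negP: unaffected.
by case: eff => [[p [-> pq _ _]]|[x [w [d [-> tx _ _ _]]]]|[x [-> tx _ _]]|[-> _ _]] //=;
  rewrite tx.
Qed.

Lemma next_place p : pre W t p != post W t p ->
  X (LPos (GF l.+1 (BP p) (VB (post W t p)))).
Proof.
move/bc_place_effect=> law.
by apply: (closed_effect Xcl law (ltnSn l)) => [a []|x [<-|[]]].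
Qed.

Lemma next_cleared x : wr W t (sval x) = Some [::] -> X (LPos (GF l.+1 (BFv x) VNull)).
Proof.
move=> tx; have law : bc_dynamic dnf (Some (BFv x, VNull)) [:: inr t] [::].
  by do 5 right; left; exists t, x.
by apply: (closed_effect Xcl law (ltnSn l)) => [a []|y [<-|[]]].
Qed.

Lemma next_trans : X (LPos (GF l.+1 BT (VB true))).
Proof.
have law : bc_dynamic dnf (Some (BT, VB true)) [:: inr t] [::] by do 9 right; left; exists t.
by apply: (closed_effect Xcl law (ltnSn l)) => [a []|y [<-|[]]].
Qed.

Lemma next_written x w o : wr W t (sval x) = Some w -> w <> [::] ->
  X (LPos (GF l.+1 (BFv x) o)) -> exists d, d \in w /\ o = VD d.
Proof.
move=> tx w0 Xo; apply: NNPP => unwritten.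
have od : o = VNull \/ exists d, d \in adm W (sval x) /\ d \notin w /\ o = VD d.
  case: (bcdom_var (bc_value_dom Xst Xo)) => [->|[d dx Eo]]; [by left|right; exists d].
  by split=> //; split=> //; apply/negP => dw; apply: unwritten; exists d.
have law : bc_dynamic dnf None [:: inr t] [:: (BFv x, o)] by do 6 right; left; exists t, x, w, o.
apply: (closed_constraint Xcl law (ltnSn l)) => [a [<-|[]] Xno|y [<-|[]]] //.
exact: Xst.1 _ (conj Xo Xno).
Qed.

Lemma next_var v : exists o, written t m.2 v o /\
  forall x : VarP W, sval x = v -> X (LPos (GF l.+1 (BFv x) (enc_opt o))).
Proof.
rewrite /written; case tv: (wr W t v) => [[|d0 w]|].
- by exists None; split=> // x xv; apply: next_cleared; rewrite xv.
- pose x0 : VarP W := exist _ v (inVp_wr tv).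
  have [o _ Xo] := stable_value_exists (BFv x0) Xst (leqnn l.+1).
  have [//|d [dw Eo]] := next_written (x := x0) tv _ Xo.
  exists (Some d); split; first by exists d.
  move=> x xv; have -> : x = x0 by apply: val_inj.
  by rewrite /= -Eo.
- exists (m.2 v); split=> // x xv.
  by rewrite -xv; apply: (next_frame (f := BFv x)); rewrite /= xv tv.
Qed.

Lemma next_state : exists m', valid_firing W m t m' /\ sigma l.+1 X = enc_state m'.
Proof.
have [eta' eta'P] := functional_choice _ next_var.
pose m' := (fire_marking t m.1, eta').
have fire : valid_firing W m t m'.
  apply/valid_firingP; split=> //; [exact: fired_enabled|exact: fired_guard|].
  by move=> v; apply: (eta'P v).1.
exists m'; split=> //; apply: (sigma_enc_state Xst (leqnn _)) => -[x|p|].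
- exact: (eta'P (sval x)).2 x erefl.
- rewrite (enc_place_next p mR fire); case: ifP => pq; first exact: next_place.
  by apply: next_frame; rewrite /= pq.
- exact: next_trans.
Qed.

End Step.

Lemma stable_step l X m : stable (prog B l.+1) X -> reachable W m -> sigma l X = enc_state m ->
  exists t m', [/\ valid_firing W m t m', label l X = enc_label t & sigma l.+1 X = enc_state m'].
Proof.
move=> Xst mR Xm; have [t Xt] := fired_exists Xst.
have [m' [fire Xm']] := next_state Xst mR Xm Xt.
exists t, m'; split=> //; apply: functional_extensionality => a.
by apply: propositional_extensionality; split=> [/(fired_uniq Xst Xt) ->|->].
Qed.

Lemma stable_initial k X : stable (prog B k) X -> sigma 0 X = enc_state (init_state W).
Proof.
move=> Xst; apply: (sigma_enc_state Xst (leq0n k)) => f.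
exact: (closed_initially Xst.2.1 ((bc_initP f _).2 erefl)).
Qed.

Lemma TS_chain_lift m steps' : reachable W m -> chain (TS_trans B) (enc_state m) steps' ->
  exists2 steps, chain (@RG_trans _ _ _ _ _ W) m steps &
    [seq (enc_label p.1, enc_state p.2) | p <- steps] = steps'.
Proof.
elim: steps' m => [|[lab s''] steps' IH] m mR /=; first by exists [::].
case=> [[l [X [Xst [_ [Xm [-> ->]]]]]] next].
have [t [m' [fire -> Xm']]] := stable_step Xst mR (esym Xm).
rewrite Xm' in next *; have [steps chain_steps <-] := IH m' (reachS mR fire) next.
by exists ((t, m') :: steps).
Qed.

Lemma RG_path_TS s0 steps : is_path (RG_init W) (@RG_trans _ _ _ _ _ W) s0 steps ->
  is_path (TS_init B) (TS_trans B) (enc_state s0)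
    [seq (enc_label p.1, enc_state p.2) | p <- steps].
Proof.
move=> [-> RGsteps].
have run0 : is_run 0 (fun _ => init_state W) (fun _ => None) by [].
split; last exact: (run_chain run0 RGsteps).
exists (run_model 0 (fun _ => init_state W) (fun _ => None)).
by rewrite (sigma_run_model _ _ (leqnn 0)); split=> //; apply: run_model_stable run0.
Qed.

Lemma TS_path_RG s0' steps' : is_path (TS_init B) (TS_trans B) s0' steps' ->
  exists s0 steps, [/\ is_path (RG_init W) (@RG_trans _ _ _ _ _ W) s0 steps,
    enc_state s0 = s0' & [seq (enc_label p.1, enc_state p.2) | p <- steps] = steps'].
Proof.
move=> [[X [Xst ->]] TSsteps]; rewrite (stable_initial Xst) in TSsteps *.
have [steps RGsteps <-] := TS_chain_lift (reach0 W) TSsteps.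
by exists (init_state W), steps.
Qed.

End Encoding.

Theorem mainTheorem1 (Var Val : eqType) (DomI Place Trans : finType)
  (W : dawnet Var Val DomI Place Trans)
  (dnf : Trans -> seq (seq (dlit W))) :
  wf_dawnet W ->
  one_safe W ->
  (forall t, ~ guard_true (dmodel W) (gd W t) -> dnf_char (dnf t) (GNot (gd W t))) ->
  trace_equiv (reachable W) (RG_init W) (@RG_trans _ _ _ _ _ W)
    (TS_init (bc dnf)) (@TS_trans _ _ _ (bc dnf)).
Proof.
move=> wfW safeW dnfW; exists (@enc_state _ _ _ _ _ W), (@enc_label Trans).
split; first exact: enc_state_inj wfW safeW.
split; first exact: enc_label_inj.
split; first exact: RG_path_TS wfW safeW dnfW.
move=> s0' steps' /(TS_path_RG wfW safeW dnfW) [s0 [steps [RGpath enc_s0 enc_steps]]].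
by exists s0, steps.
Qed.
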